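(* Given a nondeterministic planning domain $D$, one can build a deterministic Rabin word automaton $M_{D,unfair}$ over the alphabet $2^{\mathcal{F}\cup\mathcal{A}}$ that accepts exactly the infinite traces of $D$ that are not state-action fair. Moreover, $M_{D,unfair}$ has size and index at most exponential in the size of (the compact representation of) $D$.
   Context: A nondeterministic planning domain is $D=(St,Act,s_0,Tr)$ with $St=2^{\mathcal{F}}$, $Act=2^{\mathcal{A}}$, initial state $s_0$, and $Tr\subseteq St\times Act\times St$, compactly represented by a description over the Boolean variables $\mathcal{F}$ and $\mathcal{A}$. An (infinite) trace of $D$ is a sequence $(s_0\cup a_0)(s_1\cup a_1)\cdots$ over $2^{\mathcal{F}\cup\mathcal{A}}$ with $(s_{i-1},a_{i-1},s_i)\in Tr$. It is state-action fair if for every $(s,a,s')\in Tr$, if $s,a$ occurs infinitely often then $s,a$ immediately followed by $s'$ occurs infinitely often. A Rabin condition over a set $X$ is a set $\mathcal{R}$ of pairs $(I,F)$ with $I,F\subseteq X$; an infinite sequence over $X$ satisfies it if for some pair $(I,F)$ some element of $I$ occurs infinitely often and no element of $F$ occurs infinitely often. A deterministic Rabin word automaton (DRW) is $(\Sigma,Q,q_0,\delta,\mathcal{R})$ with finite $Q$, $\delta:Q\times\Sigma\to Q$, and $\mathcal{R}$ a Rabin condition over $Q$; it accepts an infinite word iff its unique run satisfies $\mathcal{R}$. Its size is $|Q|$ and its index is $|\mathcal{R}|$. *)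

From mathcomp Require Import all_boot.
Set Implicit Arguments. Unset Strict Implicit. Unset Printing Implicit Defensive.

Record domain (F A : finType) := Domain {
  init : {set F};
  trans : {set F} -> {set A} -> {set F} -> bool
}.

(* Letters of the alphabet 2^(F ∪ A); F and A are disjoint, encoded as F + A. *)
Definition letter (F A : finType) := {set (F + A)%type}.

Definition mkletter (F A : finType) (s : {set F}) (a : {set A}) : letter F A :=
  (@inl F A @: s) :|: (@inr F A @: a).

Definition inf_often (P : nat -> Prop) : Prop := forall N, exists n, N <= n /\ P n.

Definition is_trace (F A : finType) (D : domain F A) (w : nat -> letter F A) : Prop :=
  exists (s : nat -> {set F}) (a : nat -> {set A}),
    s 0 = init D /\
    (forall i, w i = mkletter (s i) (a i)) /\
    (forall i, trans D (s i) (a i) (s i.+1)).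

Definition sa_fair (F A : finType) (D : domain F A) (w : nat -> letter F A) : Prop :=
  forall s a s', trans D s a s' ->
    inf_often (fun i => w i = mkletter s a) ->
    inf_often (fun i => w i = mkletter s a /\
                        [set f | inl f \in w i.+1] = s').

Record DRW (Sigma : Type) := MkDRW {
  Q : finType;
  q0 : Q;
  delta : Q -> Sigma -> Q;
  rabin : {set ({set Q} * {set Q})}
}.

Fixpoint run (Sigma : Type) (M : DRW Sigma) (w : nat -> Sigma) (n : nat) : Q M :=
  match n with
  | 0 => q0 M
  | n'.+1 => delta (run M w n') (w n')
  end.

Definition accepts (Sigma : Type) (M : DRW Sigma) (w : nat -> Sigma) : Prop :=
  exists p, p \in rabin M /\
    (exists q, q \in p.1 /\ inf_often (fun n => run M w n = q)) /\
    (forall q, q \in p.2 -> ~ inf_often (fun n => run M w n = q)).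

Definition drw_size (Sigma : Type) (M : DRW Sigma) : nat := #|Q M|.
Definition drw_index (Sigma : Type) (M : DRW Sigma) : nat := #|rabin M|.

From mathcomp Require Import all_boot zify.
From Stdlib Require Import Classical.
Set Implicit Arguments. Unset Strict Implicit.

(* A trace is unfair iff some transition (s, a, s') of D has its source letter
   s ∪ a occurring infinitely often while s ∪ a followed by a letter with state
   part s' occurs only finitely often.  A deterministic automaton remembering
   the last two letters read (and falling into a sink as soon as the input
   stops being a trace) can observe both events, so one Rabin pair per
   transition suffices.  It has a state per pair of letters and a pair per
   transition, so its size and index are exponential in |F| + |A|. *)

Lemma card_finset (T : finType) : #|{: {set T}}| = 2 ^ #|T|.
Proof.
rewrite -cardsT -card_powerset; apply: eq_card => X.
by rewrite !inE subsetT.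
Qed.

Lemma not_inf_often (P : nat -> Prop) :
  ~ inf_often P <-> exists N, forall n, N <= n -> ~ P n.
Proof.
split=> [notP | [N evP] infP]; last by have [n [leNn Pn]] := infP N; exact: evP leNn Pn.
apply: NNPP => notEv; apply: notP => N; apply: NNPP => noP; apply: notEv.
by exists N => n leNn Pn; apply: noP; exists n.
Qed.

Lemma inf_often_succ (P : nat -> Prop) :
  inf_often (fun n => P n.+1) <-> inf_often P.
Proof.
split=> infP N; first by have [n [leNn Pn]] := infP N; exists n.+1; split; first lia.
by have [[|n] [leNn Pn]] := infP N.+1; last by exists n; split; first lia.
Qed.

Lemma inf_often_iff (P Q : nat -> Prop) :
  (forall n, P n <-> Q n) -> inf_often P <-> inf_often Q.
Proof.
by move=> PQ; split=> infP N; have [n [leNn /PQ]] := infP N; exists n.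
Qed.

Lemma eventually_forall_seq (T : eqType) (s : seq T) (P : T -> nat -> Prop) :
  (forall x, x \in s -> exists N, forall n, N <= n -> P x n) ->
  exists N, forall n, N <= n -> forall x, x \in s -> P x n.
Proof.
elim: s => [|y s IHs] evP; first by exists 0.
have [M evPy] := evP y (mem_head y s).
have [N evPs] : exists N, forall n, N <= n -> forall x, x \in s -> P x n.
  by apply: IHs => x xs; apply: evP; rewrite inE xs orbT.
exists (maxn M N) => n lenN x; rewrite inE => /predU1P [-> | xs].
  by apply: evPy; lia.
by apply: evPs; first lia.
Qed.

Lemma inf_often_mem (T : finType) (f : nat -> T) (X : {set T}) :
  inf_often (fun n => f n \in X) <->
  exists2 x, x \in X & inf_often (fun n => f n = x).
Proof.
split=> [infX | [x Xx infx] N]; last first.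
  by have [n [leNn fnx]] := infx N; exists n; rewrite fnx.
apply: NNPP => noX.
have [N evX] : exists N, forall n, N <= n -> forall x, x \in enum X -> f n <> x.
  apply: eventually_forall_seq => x; rewrite mem_enum => Xx.
  by apply/not_inf_often => infx; apply: noX; exists x.
have [n [leNn Xfn]] := infX N.
by apply: (evX n leNn (f n)); rewrite ?mem_enum.
Qed.

Section Letters.

Variables F A : finType.

Definition letter_state (x : letter F A) : {set F} := [set f | inl f \in x].
Definition letter_action (x : letter F A) : {set A} := [set b | inr b \in x].

Lemma mkletterK_state (s : {set F}) (a : {set A}) : letter_state (mkletter s a) = s.
Proof.
apply/setP => f; rewrite !inE (mem_imset _ _ (@inl_inj F A)).
by case: imsetP => [[? _] //|]; rewrite orbF.
Qed.

Lemma mkletterK_action (s : {set F}) (a : {set A}) : letter_action (mkletter s a) = a.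
Proof.
apply/setP => b; rewrite !inE (mem_imset _ _ (@inr_inj F A)).
by case: imsetP => [[? _] //|].
Qed.

Lemma mkletterE (x : letter F A) : x = mkletter (letter_state x) (letter_action x).
Proof.
apply/setP => -[f|b]; rewrite !inE.
  by rewrite (mem_imset _ _ (@inl_inj F A)) inE; case: imsetP => [[? _] //|]; rewrite orbF.
by rewrite (mem_imset _ _ (@inr_inj F A)) inE; case: imsetP => [[? _] //|].
Qed.

End Letters.

Section UnfairAutomaton.

Variables (F A : finType) (D : domain F A).

Local Notation letter := (letter F A).
Local Notation transition := ({set F} * {set A} * {set F})%type.

Lemma not_sa_fair (w : nat -> letter) :
  ~ sa_fair D w <->
  exists s a s', [/\ trans D s a s', inf_often (fun i => w i = mkletter s a)
    & ~ inf_often (fun i => w i = mkletter s a /\ letter_state (w i.+1) = s')].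
Proof.
split=> [unfair | [s [a [s' [tr infsa fin]]]] fair]; last exact/fin/fair.
apply: NNPP => noWitness; apply: unfair => s a s' tr infsa.
by apply: NNPP => fin; apply: noWitness; exists s, a, s'.
Qed.

(* [Some (p, c)]: the letters read at the previous and at the current step;
   [None]: a rejecting sink, entered when the input stops being a trace. *)
Definition ustate : finType := option (option letter * option letter).

Definition consistent (prev : option letter) (x : letter) : bool :=
  if prev is Some p then trans D (letter_state p) (letter_action p) (letter_state x)
  else letter_state x == init D.

Definition ustep (q : ustate) (x : letter) : ustate :=
  if q is Some (_, c) then (if consistent c x then Some (c, Some x) else None) else None.

Definition source_states (t : transition) : {set ustate} :=
  [set q : ustate | if q is Some (_, Some c) then c == mkletter t.1.1 t.1.2 else false].

Definition taken_states (t : transition) : {set ustate} :=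
  [set q : ustate | if q is Some (Some p, Some c)
                    then (p == mkletter t.1.1 t.1.2) && (letter_state c == t.2)
                    else false].

Definition transitions : {set transition} := [set t | trans D t.1.1 t.1.2 t.2].

Definition unfair_drw : DRW letter :=
  MkDRW (Some (None, None)) ustep
        [set (source_states t, taken_states t) | t in transitions].

Local Notation urun := (run unfair_drw).

Definition window (w : nat -> letter) (n : nat) : option letter * option letter :=
  (if n is k.+2 then Some (w k) else None, if n is k.+1 then Some (w k) else None).

Definition live (w : nat -> letter) : Prop := forall n, urun w n <> None.

Lemma run_sink (w : nat -> letter) (n m : nat) :
  urun w n = None -> n <= m -> urun w m = None.
Proof.
move=> runN; elim: m => [|m IHm]; first by rewrite leqn0 => /eqP <-.
by rewrite leq_eqVlt => /predU1P [<- // | /IHm /= ->].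
Qed.

Lemma run_window (w : nat -> letter) (n : nat) :
  urun w n <> None -> urun w n = Some (window w n).
Proof.
elim: n => [//|n IHn] /=; case runn: (urun w n) => [q|//].
have [->] : Some q = Some (window w n) by rewrite -runn IHn ?runn.
by rewrite /ustep /=; case: ifP.
Qed.

Lemma run_succ_live (w : nat -> letter) (n : nat) :
  urun w n.+1 <> None <-> urun w n <> None /\ consistent (window w n).2 (w n).
Proof.
split=> [liveSn | [liven cons_n]]; last by rewrite /= run_window //= cons_n.
have liven : urun w n <> None by move=> runN; apply: liveSn; rewrite /= runN.
by split=> //; move: liveSn; rewrite /= run_window //=; case: ifP.
Qed.

Lemma live_trace (w : nat -> letter) : live w <-> is_trace D w.
Proof.
split=> [liveW | [s [a [s0 [w_sa trans_sa]]]]].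
  have cons_n n : consistent (window w n).2 (w n) by have /run_succ_live[] := liveW n.+1.
  exists (fun i => letter_state (w i)), (fun i => letter_action (w i)).
  split; [|split] => [|i|i] /=.
  - exact/eqP/(cons_n 0).
  - exact: mkletterE.
  - exact: (cons_n i.+1).
elim=> [//|n IHn]; apply/run_succ_live; split=> //.
by case: n {IHn} => [|n] /=; rewrite !w_sa !mkletterK_state ?mkletterK_action ?s0.
Qed.

Lemma inf_often_live (w : nat -> letter) (X : {set ustate}) :
  None \notin X -> inf_often (fun n => urun w n \in X) -> live w.
Proof.
move=> NX infX n runN; have [m [lenm]] := infX n.
by rewrite (run_sink runN lenm) (negbTE NX).
Qed.

Lemma inf_often_source (w : nat -> letter) (t : transition) : live w ->
  inf_often (fun n => urun w n \in source_states t) <->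
  inf_often (fun n => w n = mkletter t.1.1 t.1.2).
Proof.
move=> liveW; rewrite -inf_often_succ; apply: inf_often_iff => n.
by rewrite run_window // inE; split=> /eqP.
Qed.

Lemma inf_often_taken (w : nat -> letter) (t : transition) : live w ->
  inf_often (fun n => urun w n \in taken_states t) <->
  inf_often (fun n => w n = mkletter t.1.1 t.1.2 /\ letter_state (w n.+1) = t.2).
Proof.
move=> liveW; rewrite -(inf_often_succ (fun n => urun w n \in _)).
rewrite -(inf_often_succ (fun n => urun w n.+1 \in _)); apply: inf_often_iff => n.
by rewrite run_window // inE; split=> /(andPP eqP eqP).
Qed.

Lemma accepts_unfair_drw (w : nat -> letter) :
  accepts unfair_drw w <->
  exists2 t, t \in transitions &
    inf_often (fun n => urun w n \in source_states t) /\
    ~ inf_often (fun n => urun w n \in taken_states t).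
Proof.
split=> [[_ [/imsetP[t tT ->] [[q [srcq infq]] taken_fin]]] | [t tT [infS finT]]].
  exists t => //; split; first by apply/inf_often_mem; exists q.
  by move/inf_often_mem => [q' takenq' infq']; exact: taken_fin takenq' infq'.
exists (source_states t, taken_states t); split; first exact: imset_f.
split=> [|q takenq infq]; last by apply: finT; apply/inf_often_mem; exists q.
by have [q srcq infq] := (inf_often_mem _ _).1 infS; exists q.
Qed.

Lemma unfair_drwP (w : nat -> letter) :
  accepts unfair_drw w <-> is_trace D w /\ ~ sa_fair D w.
Proof.
rewrite accepts_unfair_drw not_sa_fair -live_trace.
split=> [[t tT [infS finT]] | [liveW [s [a [s' [tr infsa fin]]]]]].
  have liveW : live w by apply: inf_often_live infS; rewrite inE.
  split=> //; exists t.1.1, t.1.2, t.2; split; first by rewrite inE in tT.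
    exact/(inf_often_source _ liveW).
  by move/(inf_often_taken t liveW).
exists (s, a, s'); first by rewrite inE.
by split; [apply/(inf_often_source (s, a, s') liveW) | move/(inf_often_taken (s, a, s') liveW)].
Qed.

Lemma card_ustate : #|ustate| = (2 ^ (#|F| + #|A|)).+1 ^ 2 + 1.
Proof. by rewrite card_option card_prod !card_option card_finset card_sum addn1. Qed.

Lemma card_transitions : #|transitions| <= 2 ^ (2 * #|F| + #|A|).
Proof.
apply: leq_trans (max_card _) _.
by rewrite !card_prod !card_finset -!expnD mul2n -addnn addnAC.
Qed.

End UnfairAutomaton.

Theorem lemma1 :
  exists c : nat, forall (F A : finType) (D : domain F A),
    exists M : DRW (letter F A),
      (forall w : nat -> letter F A, accepts M w <-> (is_trace D w /\ ~ sa_fair D w)) /\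
      drw_size M <= 2 ^ (c * (#|F| + #|A| + 1)) /\
      drw_index M <= 2 ^ (c * (#|F| + #|A| + 1)).
Proof.
exists 3 => F A D; exists (unfair_drw D); split; first exact: unfair_drwP.
have m_gt0 : 0 < 2 ^ (#|F| + #|A|) by rewrite expn_gt0.
have -> : 2 ^ (3 * (#|F| + #|A| + 1)) = (2 ^ (#|F| + #|A|)) ^ 3 * 8.
  by rewrite mulnC mulnDl mul1n expnD expnM.
split; first by rewrite /drw_size card_ustate; nia.
apply: leq_trans (leq_imset_card _ _) _; apply: leq_trans (card_transitions D) _.
rewrite -expnM -(expnD 2 _ 3) leq_exp2l //; lia.
Qed.
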